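(* Let $a>0$. There exists $k_0=k_0(a)$ such that for all integers $k\ge k_0$, all positive integers $N>e^{ak}$, all $\delta\in(0,1/2)$ and all $x\in[e^{ak^2},N^k]$, \[ \#\mathcal{S}_k(N,\delta,x)\ge\Big(\big(\tfrac12-\delta\big)\big(2^{-1/k}-\tfrac32e^{-a}\big)-(2/3)^k\Big)x^{1/k}. \]
   Context: For $y\in\mathbb{R}$, $\|y\|$ denotes the distance from $y$ to the nearest integer. For positive integers $k,N$ and real $\delta,x\ge0$, $\mathcal{S}_k(N,\delta,x):=\{n\in\{1,\dots,N\} : \|x/n^k\|\ge\delta\}$. *)

From Stdlib Require Import Reals List.
Import ListNotations.
Open Scope R_scope.

Definition frac_part (y : R) : R := y - IZR (Int_part y).

Definition dist_int (y : R) : R := Rmin (frac_part y) (1 - frac_part y).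

Definition S_set (k N : nat) (delta x : R) : list nat :=
  filter (fun n => if Rle_dec delta (dist_int (x / (INR n ^ k))) then true else false)
         (seq 1 N).

Definition S_card (k N : nat) (delta x : R) : nat := length (S_set k N delta x).

(* For an integer m >= 2, the n with x / n^k in [m + delta, m + 1 - delta] all lie in
   S_k(N, delta, x); they are the integers of [g (m + 1 - delta), g (m + delta)], where
   g t = (x / t)^(1/k), so there are at least g (m + delta) - g (m + 1 - delta) - 1 of them.
   Convexity of t^(-1/k) bounds this length below by (1 - 2 delta) (g (m + 1) - g (m + 2)),
   so summing over 2 <= m < L + 2 telescopes to #S >= (1 - 2 delta) (g 3 - g (L + 3)) - L.
   Taking L ~ (2/3)^k x^(1/k) and using x >= e^(a k^2) gives g (L + 3) <= (3/2) e^(-a) x^(1/k),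
   while g 3 = 3^(-1/k) x^(1/k) >= (1 - 2/k) x^(1/k); once k >= 4 / (1 - (3/2) e^(-a)) the
   loss 2/k is absorbed by 2^(-1/k) <= 1. *)

From Pilot Require Import Defs.
From Stdlib Require Import Reals Lra Lia List ZArith.
Open Scope R_scope.

Lemma one_div_INR_pos (k : nat) : (1 <= k)%nat -> 0 < 1 / INR k.
Proof.
  intros Hk; unfold Rdiv; rewrite Rmult_1_l; apply Rinv_0_lt_compat, lt_0_INR; lia.
Qed.

Lemma Rle_div_swap (a b c : R) : 0 < a -> 0 < b -> a <= c / b -> b <= c / a.
Proof.
  intros Ha Hb H.
  apply Rmult_le_reg_r with a; [easy|].
  replace (c / a * a) with (c / b * b) by (field; lra).
  rewrite Rmult_comm; apply Rmult_le_compat_r; lra.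
Qed.

Lemma Rdiv_le_swap (a b c : R) : 0 < a -> 0 < b -> c / b <= a -> c / a <= b.
Proof.
  intros Ha Hb H.
  apply Rmult_le_reg_r with a; [easy|].
  replace (c / a * a) with (c / b * b) by (field; lra).
  rewrite (Rmult_comm b); apply Rmult_le_compat_r; lra.
Qed.

Lemma Rpower_pos (b s : R) : 0 < Rpower b s.
Proof. exact (exp_pos _). Qed.

Lemma Rpower_opp_antitone (u v s : R) :
  0 < u <= v -> 0 <= s -> Rpower v (- s) <= Rpower u (- s).
Proof.
  intros Huv Hs; rewrite !Rpower_Ropp.
  apply Rinv_le_contravar; [apply Rpower_pos | now apply Rle_Rpower_l].
Qed.

Lemma Rpower_opp_le_1 (b s : R) : 1 <= b -> 0 <= s -> Rpower b (- s) <= 1.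
Proof.
  intros Hb Hs; rewrite <- (Rpower_O b) by lra.
  apply Rle_Rpower; lra.
Qed.

Lemma pow_Rpower_div (b s : R) (k : nat) :
  0 < b -> (1 <= k)%nat -> Rpower b (s / INR k) ^ k = Rpower b s.
Proof.
  intros Hb Hk; assert (0 < INR k) by (apply lt_0_INR; lia).
  rewrite <- Rpower_pow by apply Rpower_pos; rewrite Rpower_mult.
  f_equal; field; lra.
Qed.

Lemma Rpower_pow_div (b s : R) (k : nat) :
  0 < b -> (1 <= k)%nat -> Rpower (b ^ k) (s / INR k) = Rpower b s.
Proof.
  intros Hb Hk; assert (0 < INR k) by (apply lt_0_INR; lia).
  rewrite <- Rpower_pow, Rpower_mult by lra.
  f_equal; field; lra.
Qed.

Lemma Rpower_opp_ge_1_minus (b s : R) : 0 < b -> 1 - s * ln b <= Rpower b (- s).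
Proof.
  intros Hb; unfold Rpower.
  replace (1 - s * ln b) with (1 + - s * ln b) by ring.
  apply exp_ineq1_le.
Qed.

Lemma ln_3_lt_2 : ln 3 < 2.
Proof.
  rewrite <- (ln_exp 2); apply ln_increasing; [lra|].
  pose proof (exp_ineq1 2); lra.
Qed.

(* Mean value theorem on [v + d, v + 1 - d] and on [v + 1, v + 2]: the derivative of
   t^(-r) is negative and increasing. *)
Lemma Rpower_opp_gap (r v d : R) : 0 < r -> 0 < v -> 0 <= d < 1/2 ->
  (1 - 2 * d) * (Rpower (v + 1) (- r) - Rpower (v + 2) (- r))
    <= Rpower (v + d) (- r) - Rpower (v + 1 - d) (- r).
Proof.
  intros Hr Hv Hd.
  set (h' := fun t => - r * Rpower t (- r - 1)).
  assert (Hder : forall c, 0 < c -> derivable_pt_lim (fun t => Rpower t (- r)) c (h' c)).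
  { intros c Hc; apply derivable_pt_lim_power; lra. }
  destruct (MVT_cor2 (fun t => Rpower t (- r)) h' (v + d) (v + 1 - d)) as [xi [E1 B1]];
    [lra | intros; apply Hder; lra |].
  destruct (MVT_cor2 (fun t => Rpower t (- r)) h' (v + 1) (v + 2)) as [eta [E2 B2]];
    [lra | intros; apply Hder; lra |].
  assert (Heta : Rpower eta (- (r + 1)) <= Rpower xi (- (r + 1)))
    by (apply Rpower_opp_antitone; lra).
  pose proof (Rpower_pos eta (- (r + 1))).
  unfold h' in E1, E2; replace (- r - 1) with (- (r + 1)) in E1, E2 by ring.
  assert (0 <= r * (1 - 2 * d)) by nra.
  nra.
Qed.

Lemma nat_floor (z : R) : 0 <= z -> exists m : nat, z - 1 < INR m <= z.
Proof.
  intros Hz; destruct (base_Int_part z) as [H1 H2].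
  assert (Hint : (-1 < Int_part z)%Z) by (apply lt_IZR; lra).
  exists (Z.to_nat (Int_part z)); rewrite INR_IZR_INZ, Z2Nat.id by lia; lra.
Qed.

Lemma filter_length_add_le {A : Type} (p q r : A -> bool) (l : list A) :
  (forall a, q a = true -> p a = true) -> (forall a, r a = true -> p a = true) ->
  (forall a, q a = true -> r a = true -> False) ->
  (length (filter q l) + length (filter r l) <= length (filter p l))%nat.
Proof.
  intros Hq Hr Hqr; induction l as [|a l IH]; simpl; [lia|].
  specialize (Hq a); specialize (Hr a); specialize (Hqr a).
  destruct (q a), (r a), (p a); simpl; intuition (try discriminate); lia.
Qed.

Lemma filter_length_le {A : Type} (p q : A -> bool) (l : list A) :
  (forall a, q a = true -> p a = true) -> (length (filter q l) <= length (filter p l))%nat.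
Proof.
  intros Hq.
  pose proof (filter_length_add_le p q (fun _ => false) l Hq ltac:(easy) ltac:(easy)) as H.
  rewrite filter_false in H; simpl in H; lia.
Qed.

Lemma filter_seq_length_ge (P : nat -> bool) (p q : R) (N : nat) :
  0 <= p -> q <= INR N -> (forall n : nat, p <= INR n <= q -> P n = true) ->
  q - p - 1 <= INR (length (filter P (seq 1 N))).
Proof.
  intros Hp HqN HP.
  destruct (Rle_or_lt 0 q) as [Hq | Hq].
  2:{ pose proof (pos_INR (length (filter P (seq 1 N)))); lra. }
  assert (Hprefix : forall m : nat, INR m <= q -> INR m - p <= INR (length (filter P (seq 1 m)))).
  { induction m as [|m IH]; intros Hm; [simpl; lra|].
    rewrite S_INR in Hm |- *; specialize (IH ltac:(lra)).
    pose proof (pos_INR (length (filter P (seq 1 m)))).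
    rewrite seq_S, filter_app, length_app, plus_INR; cbn [filter].
    destruct (P (1 + m)%nat) eqn:HPm; cbn [length].
    - change (INR 1) with 1; lra.
    - change (INR 0) with 0.
      destruct (Rle_or_lt p (INR m + 1)); [|lra].
      rewrite HP in HPm by (rewrite plus_INR; simpl; lra); discriminate. }
  destruct (nat_floor q Hq) as [m Hm].
  assert (HmN : (m <= N)%nat) by (apply INR_le; lra).
  replace N with (m + (N - m))%nat by lia.
  rewrite seq_app, filter_app, length_app, plus_INR.
  specialize (Hprefix m ltac:(lra)); pose proof (pos_INR (length (filter P (seq (1 + m) (N - m))))).
  lra.
Qed.

Lemma dist_int_ge (m : Z) (v d : R) : 0 < d -> IZR m + d <= v <= IZR m + 1 - d -> d <= dist_int v.
Proof.
  intros Hd Hv.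
  assert (Hm : m = Int_part v) by (apply Int_part_spec; lra).
  unfold dist_int, Defs.frac_part; rewrite <- Hm; apply Rmin_glb; lra.
Qed.

(* As t runs through 2, 3, ..., the count of [far_below k delta x t] grows by at least the
   size of each window, which realizes the sum over windows without double counting. *)
Definition far_below (k : nat) (delta x t : R) (n : nat) : bool :=
  if Rle_dec delta (dist_int (x / INR n ^ k)) then
    if Rlt_dec (x / INR n ^ k) t then true else false
  else false.

Definition in_window (k : nat) (x u v : R) (n : nat) : bool :=
  if Rle_dec u (x / INR n ^ k) then
    if Rle_dec (x / INR n ^ k) v then true else false
  else false.

(* [(x / t) ^ (1 / k)], the real n at which [x / n ^ k = t]. *)
Definition root_ratio (k : nat) (x t : R) : R :=
  Rpower x (1 / INR k) * Rpower t (- (1 / INR k)).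

Section Counting.

Variables (k N : nat) (delta x : R).
Hypotheses (Hk : (1 <= k)%nat) (HN : (1 <= N)%nat) (Hdelta : 0 < delta < 1/2)
  (Hx : 0 < x) (HxN : x <= INR N ^ k).

Local Notation g := (root_ratio k x).
Local Notation count P := (length (filter P (seq 1 N))).

Lemma root_ratio_pos (t : R) : 0 < g t.
Proof. apply Rmult_lt_0_compat; apply Rpower_pos. Qed.

Lemma root_ratio_pow (t : R) : 0 < t -> g t ^ k = x / t.
Proof.
  intros Ht; unfold root_ratio.
  rewrite Rpow_mult_distr, <- Rdiv_opp_l, !pow_Rpower_div by assumption.
  rewrite Rpower_Ropp, !Rpower_1 by assumption; reflexivity.
Qed.

Lemma root_ratio_le_N (t : R) : 1 <= t -> g t <= INR N.
Proof.
  intros Ht; pose proof (one_div_INR_pos k Hk).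
  assert (HN0 : 0 < INR N) by (apply lt_0_INR; lia).
  assert (Hroot : Rpower x (1 / INR k) <= INR N).
  { rewrite <- (Rpower_1 (INR N)), <- (Rpower_pow_div (INR N) 1 k) by (lia || lra).
    apply Rle_Rpower_l; lra. }
  pose proof (Rpower_opp_le_1 t (1 / INR k) Ht ltac:(lra)).
  pose proof (Rpower_pos t (- (1 / INR k))).
  unfold root_ratio; nra.
Qed.

Lemma le_ratio_of_le_root_ratio (t : R) (n : nat) :
  0 < t -> 0 < INR n <= g t -> t <= x / INR n ^ k.
Proof.
  intros Ht Hn; apply Rle_div_swap; [apply pow_lt; lra | easy |].
  rewrite <- root_ratio_pow by easy; apply pow_incr; lra.
Qed.

Lemma ratio_le_of_root_ratio_le (t : R) (n : nat) :
  0 < t -> g t <= INR n -> x / INR n ^ k <= t.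
Proof.
  intros Ht Hn; pose proof (root_ratio_pos t).
  apply Rdiv_le_swap; [apply pow_lt; lra | easy |].
  rewrite <- root_ratio_pow by easy; apply pow_incr; lra.
Qed.

Lemma window_count (u v : R) : 1 <= u -> u <= v ->
  g u - g v - 1 <= INR (count (in_window k x u v)).
Proof.
  intros Hu Huv; pose proof (root_ratio_pos v).
  apply filter_seq_length_ge; [lra | apply root_ratio_le_N; lra |].
  intros n Hn; unfold in_window.
  destruct (Rle_dec u (x / INR n ^ k)) as [_ | C];
    [| exfalso; apply C, le_ratio_of_le_root_ratio; lra].
  destruct (Rle_dec (x / INR n ^ k) v) as [_ | C];
    [| exfalso; apply C, ratio_le_of_root_ratio_le; lra].
  reflexivity.
Qed.

Lemma window_step (j : nat) :
  (count (far_below k delta x (INR j + 2))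
   + count (in_window k x (INR j + 2 + delta) (INR j + 3 - delta))
   <= count (far_below k delta x (INR j + 3)))%nat.
Proof.
  apply filter_length_add_le; intros n; unfold far_below, in_window;
    set (v := x / INR n ^ k).
  - destruct (Rle_dec delta (dist_int v)), (Rlt_dec v (INR j + 2)),
      (Rlt_dec v (INR j + 3)); easy || lra.
  - destruct (Rle_dec (INR j + 2 + delta) v), (Rle_dec v (INR j + 3 - delta)); try easy.
    intros _.
    destruct (Rle_dec delta (dist_int v)) as [_ | C].
    + destruct (Rlt_dec v (INR j + 3)); easy || lra.
    + exfalso; apply C, (dist_int_ge (Z.of_nat (j + 2))); [lra|].
      rewrite <- INR_IZR_INZ, plus_INR; simpl; lra.
  - destruct (Rle_dec delta (dist_int v)), (Rlt_dec v (INR j + 2)),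
      (Rle_dec (INR j + 2 + delta) v); easy || lra.
Qed.

Lemma root_ratio_gap (j : nat) :
  (1 - 2 * delta) * (g (INR j + 3) - g (INR j + 4))
    <= g (INR j + 2 + delta) - g (INR j + 3 - delta).
Proof.
  pose proof (pos_INR j); pose proof (one_div_INR_pos k Hk).
  pose proof (Rpower_opp_gap (1 / INR k) (INR j + 2) delta ltac:(lra) ltac:(lra) ltac:(lra)).
  pose proof (Rpower_pos x (1 / INR k)).
  unfold root_ratio.
  replace (INR j + 2 + 1 - delta) with (INR j + 3 - delta) in * by ring.
  replace (INR j + 2 + 1) with (INR j + 3) in * by ring.
  replace (INR j + 2 + 2) with (INR j + 4) in * by ring.
  nra.
Qed.

Lemma far_below_count_ge (L : nat) :
  (1 - 2 * delta) * (g 3 - g (INR L + 3)) - INR L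
    <= INR (count (far_below k delta x (INR L + 2))).
Proof.
  induction L as [|L IH].
  - change (INR 0) with 0; rewrite !Rplus_0_l.
    pose proof (pos_INR (count (far_below k delta x 2))); lra.
  - pose proof (window_step L) as Hstep; apply le_INR in Hstep; rewrite plus_INR in Hstep.
    pose proof (window_count (INR L + 2 + delta) (INR L + 3 - delta)
      ltac:(pose proof (pos_INR L); lra) ltac:(lra)).
    pose proof (root_ratio_gap L).
    rewrite S_INR; replace (INR L + 1 + 2) with (INR L + 3) by ring;
      replace (INR L + 1 + 3) with (INR L + 4) by ring.
    lra.
Qed.

Lemma S_card_ge_telescope (L : nat) :
  (1 - 2 * delta) * (g 3 - g (INR L + 3)) - INR L <= INR (S_card k N delta x).
Proof.
  eapply Rle_trans; [apply far_below_count_ge | apply le_INR, filter_length_le].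
  intros n; unfold far_below.
  destruct (Rle_dec delta (dist_int (x / INR n ^ k))); easy.
Qed.

End Counting.

Lemma exp_pow_INR (a : R) (k : nat) : exp a ^ k = exp (a * INR k).
Proof.
  rewrite <- Rpower_pow by apply exp_pos; unfold Rpower; rewrite ln_exp.
  f_equal; ring.
Qed.

Lemma exp_le_Rpower_root (a x : R) (k : nat) :
  (1 <= k)%nat -> exp (a * INR k ^ 2) <= x -> exp (a * INR k) <= Rpower x (1 / INR k).
Proof.
  intros Hk Hx.
  pose proof (one_div_INR_pos k Hk).
  rewrite <- (Rpower_1 (exp (a * INR k))), <- (Rpower_pow_div _ 1 k) by (apply exp_pos || lia).
  apply Rle_Rpower_l; [lra|]; split; [apply pow_lt, exp_pos|].
  rewrite exp_pow_INR; replace (a * INR k * INR k) with (a * INR k ^ 2) by ring; lra.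
Qed.

Lemma root_ratio_le_div (k : nat) (x b t : R) :
  (1 <= k)%nat -> 0 < b -> b ^ k <= t -> root_ratio k x t <= Rpower x (1 / INR k) / b.
Proof.
  intros Hk Hb Ht.
  pose proof (one_div_INR_pos k Hk).
  assert (Htail : Rpower t (- (1 / INR k)) <= / b).
  { replace (/ b) with (Rpower (b ^ k) (- (1 / INR k))).
    - apply Rpower_opp_antitone; [split; [apply pow_lt|]|]; lra.
    - rewrite <- Rdiv_opp_l, Rpower_pow_div, Rpower_Ropp, Rpower_1 by (lia || lra).
      reflexivity. }
  unfold root_ratio, Rdiv; apply Rmult_le_compat_l; [left; apply Rpower_pos | exact Htail].
Qed.

Lemma S_card_ge_of_large_k (a : R) (k N : nat) (delta x : R) :
  (1 <= k)%nat -> (1 <= N)%nat -> 0 < delta < 1/2 ->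
  exp (a * INR k ^ 2) <= x -> x <= INR N ^ k ->
  4 / INR k <= 1 - 3/2 * exp (- a) ->
  INR (S_card k N delta x) >=
    ((1/2 - delta) * (Rpower 2 (- (1 / INR k)) - 3/2 * exp (- a))
      - (2/3) ^ k) * Rpower x (1 / INR k).
Proof.
  intros Hk HN Hdelta Hx1 Hx2 Hkc.
  replace (4 / INR k) with (4 * (1 / INR k)) in Hkc by (unfold Rdiv; ring).
  set (r := 1 / INR k) in *; set (y := Rpower x r); set (c := 3/2 * exp (- a)) in *.
  pose proof (one_div_INR_pos k Hk) as Hr; fold r in Hr.
  assert (Hx : 0 < x) by (pose proof (exp_pos (a * INR k ^ 2)); lra).
  assert (Hy : exp (a * INR k) <= y) by now apply exp_le_Rpower_root.
  assert (Hypos : 0 < y) by apply Rpower_pos.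
  assert (H23 : 0 < (2/3) ^ k) by (apply pow_lt; lra).
  destruct (nat_floor ((2/3) ^ k * y)) as [L HL];
    [pose proof (exp_pos (a * INR k)); nra |].
  assert (Htail : root_ratio k x (INR L + 3) <= c * y).
  { replace (c * y) with (y / (2/3 * exp a))
      by (unfold c; rewrite exp_Ropp; field; pose proof (exp_pos a); lra).
    apply root_ratio_le_div; [easy | pose proof (exp_pos a); lra |].
    rewrite Rpow_mult_distr, exp_pow_INR.
    pose proof (Rmult_le_compat_l _ _ _ (Rlt_le _ _ H23) Hy); lra. }
  assert (Hhead : (1 - 2 * r) * y <= root_ratio k x 3).
  { assert (H3 : 1 - 2 * r <= Rpower 3 (- r)).
    { pose proof (Rpower_opp_ge_1_minus 3 r ltac:(lra)); pose proof ln_3_lt_2; nra. }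
    unfold root_ratio; fold r y; nra. }
  pose proof (S_card_ge_telescope k N delta x Hk HN Hdelta Hx Hx2 L).
  pose proof (Rpower_opp_le_1 2 r ltac:(lra) ltac:(lra)).
  assert (Hbody : (1 - 2 * delta) * ((1 - 2 * r - c) * y)
          <= (1 - 2 * delta) * (root_ratio k x 3 - root_ratio k x (INR L + 3)))
    by (apply Rmult_le_compat_l; lra).
  assert (Hslack : 0 <= (1/2 - delta) * y * ((1 - 4 * r - c) + (1 - Rpower 2 (- r))))
    by (apply Rmult_le_pos; [apply Rmult_le_pos |]; lra).
  nra.
Qed.

Theorem lemma3p6 (a : R) (ha : 0 < a) :
  exists k0 : nat, forall k : nat, (1 <= k)%nat -> (k0 <= k)%nat ->
    forall N : nat, (1 <= N)%nat -> exp (a * INR k) < INR N ->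
    forall delta x : R, 0 < delta < 1/2 ->
      exp (a * INR k ^ 2) <= x -> x <= INR N ^ k ->
      INR (S_card k N delta x) >=
        ((1/2 - delta) * (Rpower 2 (- (1 / INR k)) - 3/2 * exp (- a))
          - (2/3) ^ k) * Rpower x (1 / INR k).
Proof.
  destruct (Rlt_or_le (3/2 * exp (- a)) 1) as [Hc | Hc].
  - destruct (INR_unbounded (4 / (1 - 3/2 * exp (- a)))) as [k0 Hk0].
    exists k0; intros k Hk Hk0k N HN _ delta x Hdelta Hx1 Hx2.
    apply S_card_ge_of_large_k; try assumption.
    apply Rdiv_le_swap; [apply lt_0_INR; lia | lra |].
    apply le_INR in Hk0k; lra.
  - exists 1%nat; intros k Hk _ N _ _ delta x Hdelta _ _.
    pose proof (Rpower_opp_le_1 2 (1 / INR k) ltac:(lra) (Rlt_le _ _ (one_div_INR_pos k Hk))).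
    pose proof (pow_lt (2/3) k ltac:(lra)); pose proof (Rpower_pos x (1 / INR k)).
    pose proof (pos_INR (S_card k N delta x)).
    assert ((1/2 - delta) * (Rpower 2 (- (1 / INR k)) - 3/2 * exp (- a)) - (2/3) ^ k <= 0)
      by nra.
    nra.
Qed.
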